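(* Let $m_1\in\mathbb N$, $\theta=(\theta_1,\dots,\theta_{m_1})$ with $\theta_i>0$, and let $u=(u_1,\dots,u_{m_1})$ be a function of $t$ with values in $[0,\infty)^{m_1}$, differentiable in $t$. For integers $p\ge0$ let $\mathcal H_p[u]=\sum_{\beta\in\mathbb Z_+^{m_1},|\beta|=p}\binom{p}{\beta}\theta^{\beta^2}u^\beta$. Then $\partial_t\mathcal H_0[u]=0$, $\partial_t\mathcal H_1[u]=\sum_{j=1}^{m_1}\theta_j\partial_tu_j$, and for every integer $p\ge2$, $$\partial_t\mathcal H_p[u]=\sum_{|\beta|=p-1}\binom{p}{\beta}\theta^{\beta^2}u^\beta\sum_{j=1}^{m_1}\theta_j^{2\beta_j+1}\partial_tu_j.$$
   Context: $\mathbb Z_+^{m}$ is the set of $m$-tuples of nonnegative integers; for $\beta\in\mathbb Z_+^m$, $|\beta|=\sum_i\beta_i$, $\beta^2=(\beta_1^2,\dots,\beta_m^2)$, $z^\alpha=\prod_iz_i^{\alpha_i}$ with $0^0=1$, and $\binom{p}{\beta}=\frac{p!}{\beta_1!\cdots\beta_m!}$ (also used when $|\beta|<p$). *)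

From HB Require Import structures.
From mathcomp Require Import all_boot all_order all_algebra.
From mathcomp Require Import all_classical all_reals all_analysis.
Set Implicit Arguments. Unset Strict Implicit. Unset Printing Implicit Defensive.
Import Order.TTheory GRing.Theory Num.Theory.
Local Open Scope ring_scope.

(* Sum over multi-indices beta in Z_+^m with |beta| = p.
   A multi-index is encoded as a finite function 'I_m -> 'I_p.+1
   (every entry of a multi-index with |beta| = p is <= p). *)
Definition misum {R : realType} (m p : nat) (F : ('I_m -> nat) -> R) : R :=
  \sum_(b : {ffun 'I_m -> 'I_p.+1} | (\sum_(j < m) (b j : nat))%N == p)
     F (fun j => (b j : nat)).

(* binom(p, beta) = p! / (beta_1! ... beta_m!)  (also used when |beta| < p) *)
Definition multinom {R : realType} (m p : nat) (b : 'I_m -> nat) : R :=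
  (p`!)%:R / (\prod_(j < m) ((b j)`!)%:R).

(* z^alpha = prod_i z_i^alpha_i with 0^0 = 1 *)
Definition mpow {R : realType} (m : nat) (z : 'I_m -> R) (a : 'I_m -> nat) : R :=
  \prod_(j < m) z j ^+ a j.

Definition msq (m : nat) (b : 'I_m -> nat) : 'I_m -> nat := fun j => (b j ^ 2)%N.

Definition Hp {R : realType} (m : nat) (theta : 'I_m -> R) (p : nat)
  (v : 'I_m -> R) : R :=
  misum p (fun b => multinom p b * mpow theta (msq b) * mpow v b).

From HB Require Import structures.
From mathcomp Require Import all_boot all_order all_algebra.
From mathcomp Require Import all_classical all_reals all_analysis.
From mathcomp Require Import zify ring.
Import Order.TTheory GRing.Theory Num.Theory numFieldNormedType.Exports.
Local Open Scope ring_scope.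

(* Differentiate H_p[u] term by term; by the Leibniz rule the monomial u^b
   contributes b_j u^(b - e_j) u_j' for each j.  Substituting b = c + e_j
   (the terms with b_j = 0 vanish), the factor b_j = c_j + 1 cancels against
   the multinomial coefficient, (c_j + 1) binom(p, c + e_j) = binom(p, c), and
   theta^((c + e_j)^2) = theta^(c^2) theta_j^(2 c_j + 1).  The cases p = 0, 1
   follow since H_0 = 1 and the only index of size 0 is c = 0. *)


Section LeibnizRule.
Context {R : numFieldType} {V W : normedModType R}.

Lemma is_derive_big_sum (I : Type) (r : seq I) (P : pred I) (h : I -> V -> W)
    (dh : I -> W) (x v : V) :
  (forall i, P i -> is_derive x v (h i) (dh i)) ->
  is_derive x v (fun y => \sum_(i <- r | P i) h i y) (\sum_(i <- r | P i) dh i).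
Proof.
move=> hd; have -> : (fun y => \sum_(i <- r | P i) h i y) = \sum_(i <- r | P i) h i.
  by apply/funext => y; rewrite fct_sumE.
elim/big_ind2: _ => //; [exact: is_derive_cst | move=> *; exact: is_deriveD].
Qed.

Lemma is_derive_prod {m : nat} (g : 'I_m -> V -> R) (dg : 'I_m -> R) (x v : V) :
  (forall i, is_derive x v (g i) (dg i)) ->
  is_derive x v (fun y => \prod_(i < m) g i y)
    (\sum_(j < m) dg j * \prod_(k < m | k != j) g k x).
Proof.
elim: m g dg => [|m IHm] g dg hg.
  by rewrite big_ord0; under eq_fun do rewrite big_ord0; exact: is_derive_cst.
under eq_fun do rewrite big_ord_recl.
apply: is_derive_eq.
  exact: (is_deriveM (hg ord0) (IHm _ _ (fun i => hg (lift ord0 i)))).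
rewrite big_ord_recl /= /GRing.scale /= mulr_sumr [in RHS]big_mkcond big_ord_recl /=.
rewrite addrC; congr (_ + _).
  by rewrite mul1r mulrC.
apply: eq_bigr => j _; rewrite (bigD1 ord0) //= mulrCA; congr (_ * (_ * _)).
rewrite [RHS]big_mkcond big_ord_recl /= mul1r big_mkcond.
by apply: eq_bigr => k _; rewrite (inj_eq lift_inj) andbT.
Qed.
End LeibnizRule.

Section MultiIndices.
Context {R : realType} {m : nat}.
Implicit Types (b c : 'I_m -> nat) (z : 'I_m -> R).

Definition mincr (j : 'I_m) b : 'I_m -> nat := fun i => (b i + (i == j))%N.
Definition mdecr (j : 'I_m) b : 'I_m -> nat := fun i => (b i - (i == j))%N.

Lemma mincrK j : cancel (mincr j) (mdecr j).
Proof. by move=> c; apply/funext => i; rewrite /mdecr /mincr addnK. Qed.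

Lemma misum0 (F : ('I_m -> nat) -> R) : misum 0 F = F (fun _ => 0%N).
Proof.
have b0 (b : {ffun 'I_m -> 'I_1}) i : (b i : nat) = 0%N by case: (b i) => -[].
rewrite /misum (big_pred1 [ffun=> ord0]) => [|b /=].
  by congr F; apply/funext => i; rewrite ffunE.
rewrite big1 ?eqxx => [|i _]; last exact: b0.
by apply/esym/eqP/ffunP => i; apply: ord_inj; rewrite ffunE b0.
Qed.

Lemma sum_mincr j c : (\sum_(i < m) mincr j c i = (\sum_(i < m) c i).+1)%N.
Proof.
rewrite big_split /= -addn1; congr addn.
by rewrite (bigD1 j) //= eqxx big1 // => i /negbTE ->.
Qed.

Lemma mdecr_lt_sum j b i : (0 < b j)%N -> (mdecr j b i < \sum_(k < m) b k)%N.
Proof.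
rewrite /mdecr; case: (eqVneq i j) => [->|ij] bj.
  by rewrite (bigD1 j) //=; lia.
have : (b i + b j <= \sum_(k < m) b k)%N.
  by rewrite (bigD1 i) //= (bigD1 j) 1?eq_sym //= addnA leq_addr.
lia.
Qed.

Lemma mdecrK j b : (0 < b j)%N -> mincr j (mdecr j b) = b.
Proof.
move=> bj; apply/funext => i; rewrite /mincr /mdecr.
by case: (eqVneq i j) => [->|_]; rewrite ?subnK ?subn0 ?addn0.
Qed.

Lemma misum_sumr (n p : nat) (F : 'I_n -> ('I_m -> nat) -> R) :
  misum p (fun b => \sum_(j < n) F j b) = \sum_(j < n) misum p (F j).
Proof. exact: exchange_big. Qed.

Lemma misum_mincr (q : nat) (j : 'I_m) (G : ('I_m -> nat) -> R) :
  misum q.+1 (fun b => (b j)%:R * G b)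
  = misum q (fun c => (c j).+1%:R * G (mincr j c)).
Proof.
rewrite /misum (bigID (fun b : {ffun 'I_m -> 'I_q.+2} => (0 < b j)%N)) /=.
rewrite [X in _ + X]big1 ?addr0 => [|b /andP[_]]; last first.
  by rewrite lt0n negbK => /eqP ->; rewrite mul0r.
pose incr (c : {ffun 'I_m -> 'I_q.+1}) : {ffun 'I_m -> 'I_q.+2} :=
  [ffun i => inord (mincr j (fun k => c k) i)].
pose decr (b : {ffun 'I_m -> 'I_q.+2}) : {ffun 'I_m -> 'I_q.+1} :=
  [ffun i => inord (mdecr j (fun k => b k) i)].
have incrE (c : {ffun 'I_m -> 'I_q.+1}) i : (incr c i : nat) = mincr j (fun k => c k) i.
  rewrite ffunE inordK // /mincr.
  by have := ltn_ord (c i); case: (i == j); lia.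
have decrE (b : {ffun 'I_m -> 'I_q.+2}) i :
    (\sum_(k < m) (b k : nat) == q.+1) && (0 < b j)%N ->
    (decr b i : nat) = mdecr j (fun k => b k) i.
  case/andP => /eqP sb bj; rewrite ffunE inordK //.
  by have := mdecr_lt_sum j (fun k => b k) i bj; rewrite sb.
rewrite (reindex_onto incr decr) => [|b bP]; last first.
  apply/ffunP => i; apply: ord_inj.
  by rewrite incrE (funext (decrE b ^~ bP)) mdecrK //; case/andP: bP.
have decrK (c : {ffun 'I_m -> 'I_q.+1}) : decr (incr c) = c.
  apply/ffunP => i; apply: ord_inj.
  by rewrite ffunE (funext (incrE c)) mincrK inordK.
apply: eq_big => [c|c _]; rewrite incrE /mincr eqxx addn1.
  by rewrite (eq_bigr _ (fun i _ => incrE c i)) sum_mincr eqSS decrK eqxx !andbT.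
by rewrite (funext (incrE c)).
Qed.

Lemma prod_fact_mincr j c :
  (\prod_(i < m) (mincr j c i)`! = (c j).+1 * \prod_(i < m) (c i)`!)%N.
Proof.
rewrite (bigD1 j) //= [in RHS](bigD1 j) //= /mincr eqxx addn1 factS -mulnA.
by congr (_ * (_ * _))%N; apply: eq_bigr => i /negbTE ->; rewrite addn0.
Qed.

Lemma multinom_mincr p j c :
  (c j).+1%:R * multinom p (mincr j c) = multinom p c :> R.
Proof.
by rewrite /multinom -!natr_prod prod_fact_mincr natrM invfM mulrCA mulVKf// pnatr_eq0.
Qed.

Lemma mpow0 z : mpow z (fun _ => 0%N) = 1.
Proof. by rewrite /mpow big1. Qed.

Lemma multinom0 p : multinom p (fun _ : 'I_m => 0%N) = p`!%:R :> R.
Proof. by rewrite /multinom big1 ?invr1 ?mulr1. Qed.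

Lemma Hp0 theta z : Hp theta 0 z = 1 :> R.
Proof. by rewrite /Hp misum0 multinom0 !mpow0 !mulr1. Qed.

Lemma mpow_mdecrE z b j :
  mpow z (mdecr j b) = z j ^+ (b j).-1 * \prod_(k < m | k != j) z k ^+ b k.
Proof.
rewrite /mpow (bigD1 j) //= /mdecr eqxx subn1; congr (_ * _).
by apply: eq_bigr => k /negbTE ->; rewrite subn0.
Qed.

Lemma mpow_msq_mincr z j c :
  mpow z (msq (mincr j c)) = mpow z (msq c) * z j ^+ (2 * c j + 1).
Proof.
rewrite /mpow /msq (bigD1 j) //= [in RHS](bigD1 j) //= /mincr eqxx mulrAC -exprD.
congr (_ ^+ _ * _); first by rewrite addn1 !expnS expn0; lia.
by apply: eq_bigr => i /negbTE ->; rewrite addn0.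
Qed.

End MultiIndices.

Section DerivativeOfHp.
Context {R : realType} {V : normedModType R} {m : nat}.
Context {u : V -> 'I_m -> R} {du : 'I_m -> R} {x v : V}.
Hypothesis u_der : forall j, is_derive x v (fun y => u y j) (du j).

Lemma is_derive_mpow b :
  is_derive x v (fun y => mpow (u y) b)
    (\sum_(j < m) (b j)%:R * du j * mpow (u x) (mdecr j b)).
Proof.
rewrite {1}/mpow; apply: is_derive_eq.
  apply: (is_derive_prod (fun j y => u y j ^+ b j)) => j.
  by rewrite -exprfctE; exact: is_deriveX.
by apply: eq_bigr => j _; rewrite mpow_mdecrE /GRing.scale /=; ring.
Qed.

Lemma is_derive_Hp theta p :
  is_derive x v (fun y => Hp theta p (u y))
    (misum p (fun b => multinom p b * mpow theta (msq b)
       * \sum_(j < m) (b j)%:R * du j * mpow (u x) (mdecr j b))).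
Proof.
apply: is_derive_big_sum => b _.
exact: (is_deriveZ _ (is_derive_mpow _)).
Qed.

End DerivativeOfHp.

Lemma derive_Hp_succ (R : realType) (V : normedModType R) (m : nat)
    (theta : 'I_m -> R) (u : V -> 'I_m -> R) (x v : V) (q : nat) :
  (forall j, derivable (fun y => u y j) x v) ->
  'D_v (fun y => Hp theta q.+1 (u y)) x
  = misum q (fun c => multinom q.+1 c * mpow theta (msq c) * mpow (u x) c
      * \sum_(j < m) theta j ^+ (2 * c j + 1) * 'D_v (fun y => u y j) x).
Proof.
move=> u_der; set du := fun j => 'D_v (fun y => u y j) x.
have u_du j : is_derive x v (fun y => u y j) (du j) by exact: derivableP.
rewrite (derive_val (is_derive := is_derive_Hp u_du theta q.+1)).
transitivity (\sum_(j < m) misum q.+1 (fun b => (b j)%:R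
    * (multinom q.+1 b * mpow theta (msq b) * du j * mpow (u x) (mdecr j b)))).
  rewrite -misum_sumr; congr misum; apply/funext => b.
  by rewrite mulr_sumr; apply: eq_bigr => j _; ring.
under eq_bigr do rewrite misum_mincr.
rewrite -misum_sumr; congr misum; apply/funext => c.
rewrite mulr_sumr; apply: eq_bigr => j _.
by rewrite mincrK mpow_msq_mincr -[multinom q.+1 c](multinom_mincr _ j) /du; ring.
Qed.

Theorem lemmaA1 (R : realType) (m1 : nat) (theta : 'I_m1 -> R)
  (u : R -> 'I_m1 -> R)
  (htheta : forall j, 0 < theta j)
  (hu_nonneg : forall t j, 0 <= u t j)
  (hu_der : forall t j, derivable (fun s => u s j) t 1) :
  (forall t, derive1 (fun s => Hp theta 0 (u s)) t = 0)
  /\ (forall t, derive1 (fun s => Hp theta 1 (u s)) t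
                = \sum_(j < m1) theta j * derive1 (fun s => u s j) t)
  /\ (forall (p : nat) t, (2 <= p)%N ->
        derive1 (fun s => Hp theta p (u s)) t
        = @misum R m1 (p.-1)%N (fun b => multinom p b * mpow theta (msq b) * mpow (u t) b
              * \sum_(j < m1) theta j ^+ (2 * b j + 1) * derive1 (fun s => u s j) t)).
Proof.
split; [|split].
- move=> t; under eq_fun do rewrite Hp0; exact: derive1_cst.
- move=> t; rewrite derive1E derive_Hp_succ // misum0 multinom0 !mpow0 !mul1r.
  by apply: eq_bigr => j _; rewrite derive1E.
- case=> [|[|p]] // t _; rewrite derive1E derive_Hp_succ //; congr misum.
  by apply/funext => b; under [in RHS]eq_bigr do rewrite derive1E.
Qed.
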